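(* Let $(E,\mathcal{D},\rho)$ be a U-matroid and let $a\in E$ with $\{a\}\notin\mathcal{D}$. Then $(E,\mathcal{D}[a],\rho_a)$ is a U-matroid (and hence a lattice extension of $(E,\mathcal{D},\rho)$), where $\rho_a$ is the generous atom extension of $\rho$ to $\mathcal{D}[a]$.
   Context: An accessible distributive lattice on a finite set $E$ is a family $\mathcal{D}\subseteq 2^E$ containing $\emptyset$ and $E$, closed under union and intersection, such that every nonempty $A\in\mathcal{D}$ contains some $x$ with $A\setminus\{x\}\in\mathcal{D}$. A U-matroid is a triple $(E,\mathcal{D},\rho)$ with $\mathcal{D}$ an accessible distributive lattice and $\rho:\mathcal{D}\to\mathbb{N}$ satisfying $\rho(\emptyset)=0$; $\rho(A)\le\rho(B)$ whenever $A\subseteq B$; $\rho(A)+\rho(B)\ge\rho(A\cup B)+\rho(A\cap B)$; and $\rho(A\cup\{e\})-\rho(A)\le1$ whenever $A,A\cup\{e\}\in\mathcal{D}$. For $S\subseteq E$, $\sup_\mathcal{D}(S)=\bigcap\{B\in\mathcal{D}:B\supseteq S\}$. For $a\in E$ with $\{a\}\notin\mathcal{D}$, let $\mathcal{D}[a]=\mathcal{D}\cup\{S\cup\{a\}:S\in\mathcal{D}\}$. The generous atom extension $\rho_a:\mathcal{D}[a]\to\mathbb{N}$ is: $\rho_a(S)=\rho(S)$ if $S\in\mathcal{D}$; if $S\notin\mathcal{D}$ (so $S\setminus\{a\}\in\mathcal{D}$), $\rho_a(S)=\rho(S\setminus\{a\})$ when $\rho(S\setminus\{a\})=\rho(\sup_\mathcal{D}(S))$,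 and $\rho_a(S)=\rho(S\setminus\{a\})+1$ when $\rho(S\setminus\{a\})<\rho(\sup_\mathcal{D}(S))$. A lattice extension of $(E,\mathcal{D},\rho)$ is a U-matroid $(E,\mathcal{D}',\rho')$ with $\mathcal{D}\subseteq\mathcal{D}'$ and $\rho'|_\mathcal{D}=\rho$. *)

(* Ground set E is a finType; subsets are {set E};
   a family of subsets is {set {set E}}; rank functions are total
   functions {set E} -> nat, only their values on the lattice matter. *)
From mathcomp Require Import all_boot.
Set Implicit Arguments. Unset Strict Implicit. Unset Printing Implicit Defensive.

Section UMatroid.
Variable E : finType.

Definition accessible_distr_lattice (D : {set {set E}}) : Prop :=
  [/\ set0 \in D, [set: E] \in D,
      (forall A B, A \in D -> B \in D -> A :|: B \in D),
      (forall A B, A \in D -> B \in D -> A :&: B \in D) &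
      (forall A, A \in D -> A != set0 -> exists2 x, x \in A & A :\ x \in D)].

Definition U_matroid (D : {set {set E}}) (rho : {set E} -> nat) : Prop :=
  [/\ accessible_distr_lattice D,
      rho set0 = 0,
      (forall A B, A \in D -> B \in D -> A \subset B -> rho A <= rho B),
      (forall A B, A \in D -> B \in D ->
          rho (A :|: B) + rho (A :&: B) <= rho A + rho B) &
      (forall A e, A \in D -> A :|: [set e] \in D ->
          rho (A :|: [set e]) <= (rho A).+1)].

Definition supD (D : {set {set E}}) (S : {set E}) : {set E} :=
  \bigcap_(B in D | S \subset B) B.

Definition Dext (D : {set {set E}}) (a : E) : {set {set E}} :=
  D :|: [set S :|: [set a] | S in D].

Definition rho_gen (D : {set {set E}}) (rho : {set E} -> nat) (a : E)
    (S : {set E}) : nat :=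
  if S \in D then rho S
  else if rho (S :\ a) == rho (supD D S) then rho (S :\ a)
       else (rho (S :\ a)).+1.

Definition lattice_extension (D : {set {set E}}) (rho : {set E} -> nat)
    (D' : {set {set E}}) (rho' : {set E} -> nat) : Prop :=
  [/\ U_matroid D' rho', D \subset D' & (forall A, A \in D -> rho' A = rho A)].

End UMatroid.

From mathcomp Require Import all_boot zify.
Set Implicit Arguments. Unset Strict Implicit. Unset Printing Implicit Defensive.

(* On D[a] the generous extension is given by the closure formula
     rho_a X = min_(Y in D) rho Y + #|X :\: Y|.
   The minimum is attained at X itself, at sup_D(X) or at X :\ a. Every Y
   gives an upper bound because X contains a member T of D with X :\ a ⊆ T,
   and rho Z <= rho Y + #|Z :\: Y| for Y ⊆ Z in D (applied to Z = Y ∪ T):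
   remove from Z an element x with Z :\ x in D, paying 1 by the unit-increase
   axiom if x ∉ Y, and nothing if x ∈ Y, by submodularity on Z :\ x and Y.
   A minimum of this shape inherits monotonicity, submodularity and unit
   increase from X |-> #|X :\: Y|, the submodularity because #|X :\: Y| is
   submodular jointly in (X, Y). *)

Lemma cardsDUI_le (T : finType) (A B Y Z : {set T}) :
  #|(A :|: B) :\: (Y :|: Z)| + #|(A :&: B) :\: (Y :&: Z)| <=
  #|A :\: Y| + #|B :\: Z|.
Proof.
rewrite -cardsUI -[X in _ <= X]cardsUI.
by apply: leq_add; apply/subset_leq_card/subsetP => x; rewrite !inE;
  case: (x \in A); case: (x \in B); case: (x \in Y); case: (x \in Z).
Qed.

Section Sup.
Variables (E : finType) (D : {set {set E}}).

Lemma supD_sup (S : {set E}) : S \subset supD D S.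
Proof. by apply/bigcapsP => B /andP[]. Qed.

Lemma supD_min (S Z : {set E}) : Z \in D -> S \subset Z -> supD D S \subset Z.
Proof. by move=> ZD sSZ; apply: bigcap_inf; rewrite ZD. Qed.

Hypotheses (DT : [set: E] \in D)
  (DI : forall A B, A \in D -> B \in D -> A :&: B \in D).

Lemma supD_in (S : {set E}) : supD D S \in D.
Proof. by apply: (big_ind (fun B => B \in D)) => // B /andP[]. Qed.

End Sup.

Section AtomExtension.
Variables (E : finType) (D : {set {set E}}) (a : E).

Lemma subset_Dext : D \subset Dext D a.
Proof. exact: subsetUl. Qed.

Lemma DextP (X : {set E}) :
  reflect (exists T, [/\ T \in D, X :\ a \subset T & T \subset X])
          (X \in Dext D a).
Proof.
apply: (iffP idP).
  rewrite inE => /orP[XD | /imsetP[S SD ->]].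
    by exists X; rewrite subsetDl.
  by exists S; rewrite setDUl setDv setU0 subsetDl subsetUl.
case=> T [TD sXaT sTX].
have defX : X = T :|: (X :&: [set a]).
  apply/eqP; rewrite eqEsubset subUset sTX subsetIl !andbT.
  apply/subsetP => x xX; rewrite !inE xX.
  by case: (eqVneq x a) => [_|xa]; rewrite ?orbT // (subsetP sXaT) // !inE xa.
case/boolP: (a \in X) => aX; rewrite inE defX.
  rewrite (setIidPr _); last by rewrite sub1set.
  by apply/orP; right; exact: imset_f.
suff -> : X :&: [set a] = set0 by rewrite setU0 TD.
by apply/eqP; rewrite setI_eq0 disjoint_sym disjoints1.
Qed.

Lemma Dext_notin (X : {set E}) :
  X \in Dext D a -> X \notin D -> a \in X /\ X :\ a \in D.
Proof.
rewrite inE => /orP[-> // | /imsetP[S SD ->]] XnD.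
have aS : a \notin S by apply: contra XnD => aS; rewrite (setUidPl _) ?sub1set.
split; first by rewrite !inE eqxx orbT.
rewrite setDUl setDv setU0 (setDidPl _) //.
by rewrite disjoint_sym disjoints1.
Qed.

Lemma rho_gen_in (rho : {set E} -> nat) (X : {set E}) :
  X \in D -> rho_gen D rho a X = rho X.
Proof. by rewrite /rho_gen => ->. Qed.

Section Closure.
Hypotheses (DU : forall A B, A \in D -> B \in D -> A :|: B \in D)
  (DI : forall A B, A \in D -> B \in D -> A :&: B \in D).

Lemma DextU (A B : {set E}) :
  A \in Dext D a -> B \in Dext D a -> A :|: B \in Dext D a.
Proof.
move=> /DextP[T [TD sAT sTA]] /DextP[T' [T'D sBT' sT'B]]; apply/DextP.
by exists (T :|: T'); rewrite DU // setDUl !setUSS.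
Qed.

Lemma DextI (A B : {set E}) :
  A \in Dext D a -> B \in Dext D a -> A :&: B \in Dext D a.
Proof.
move=> /DextP[T [TD sAT sTA]] /DextP[T' [T'D sBT' sT'B]]; apply/DextP.
by exists (T :&: T'); rewrite DI // setDIl !setISS.
Qed.

End Closure.

Lemma Dext_lattice :
  accessible_distr_lattice D -> accessible_distr_lattice (Dext D a).
Proof.
case=> D0 DT DU DI Dacc; have DDa := subsetP subset_Dext.
split; [exact: DDa | exact: DDa | exact: DextU | exact: DextI |].
move=> X XDa X0; case/boolP: (X \in D) => XD.
  by have [x xX XxD] := Dacc X XD X0; exists x; rewrite ?DDa.
by have [aX XaD] := Dext_notin XDa XD; exists a; rewrite ?DDa.
Qed.

Section Rank.
Variable rho : {set E} -> nat.
Hypotheses (DT : [set: E] \in D)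
  (DU : forall A B, A \in D -> B \in D -> A :|: B \in D)
  (DI : forall A B, A \in D -> B \in D -> A :&: B \in D)
  (Dacc : forall A, A \in D -> A != set0 -> exists2 x, x \in A & A :\ x \in D)
  (rho_mono : forall A B, A \in D -> B \in D -> A \subset B -> rho A <= rho B)
  (rho_submod : forall A B, A \in D -> B \in D ->
     rho (A :|: B) + rho (A :&: B) <= rho A + rho B)
  (rho_unit : forall A e, A \in D -> A :|: [set e] \in D ->
     rho (A :|: [set e]) <= (rho A).+1).

Local Notation rho_a := (rho_gen D rho a).

Lemma rho_le_card (X Y : {set E}) :
  X \in D -> Y \in D -> Y \subset X -> rho X <= rho Y + #|X :\: Y|.
Proof.
have [n] := ubnP #|X|; elim: n X Y => // n IH X Y ltXn XD YD sYX.
have [X0 | X0] := eqVneq X set0.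
  by move: sYX; rewrite X0 subset0 => /eqP->; rewrite leq_addr.
have [x xX XxD] := Dacc XD X0.
have ltXxn : #|X :\ x| < n by move: ltXn; rewrite (cardsD1 x) xX.
have defX : X :\ x :|: [set x] = X by rewrite setUC setD1K.
case/boolP: (x \in Y) => xY.
  have defYx : (X :\ x) :&: Y = Y :\ x by rewrite setIDAC (setIidPr sYX).
  have YxD : Y :\ x \in D by rewrite -defYx DI.
  have XxUY : (X :\ x) :|: Y = X.
    have x1Y : [set x] \subset Y by rewrite sub1set.
    by rewrite -(setUidPr x1Y) setUA defX (setUidPl sYX).
  have XxDYx : (X :\ x) :\: (Y :\ x) = X :\: Y.
    by apply/setP => z; rewrite !inE; case: (eqVneq z x) => [->|]; rewrite ?xY.
  have := rho_submod XxD YD; rewrite XxUY defYx.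
  have := IH _ _ ltXxn XxD YxD (setSD _ sYX); rewrite XxDYx.
  lia.
have sYXx : Y \subset X :\ x.
  apply/subsetP => z zY; rewrite !inE (subsetP sYX) // andbT.
  by apply: contraNneq xY => <-.
have cardXY : #|X :\: Y| = #|(X :\ x) :\: Y|.+1.
  by rewrite (cardsD1 x) !inE xX xY !setDDl setUC.
have unitX : rho X <= (rho (X :\ x)).+1 by rewrite -{1}defX rho_unit ?defX.
have := IH _ _ ltXxn XxD YD sYXx; rewrite cardXY.
lia.
Qed.

Lemma rhoU_le_card (Y C : {set E}) :
  Y \in D -> C \in D -> rho (Y :|: C) <= rho Y + #|C :\: Y|.
Proof.
move=> YD CD; have := rho_le_card (DU YD CD) YD (subsetUl Y C).
by rewrite setDUl setDv set0U.
Qed.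

Lemma rho_gen_out (X : {set E}) : X \in Dext D a -> X \notin D ->
  rho_a X = minn (rho (supD D X)) (rho (X :\ a)).+1.
Proof.
move=> XDa XnD; have [_ XaD] := Dext_notin XDa XnD.
have le_sup : rho (X :\ a) <= rho (supD D X).
  by rewrite rho_mono ?supD_in // (subset_trans (subsetDl X _) (supD_sup D X)).
rewrite /rho_gen (negbTE XnD); case: eqVneq => [<- | ne].
  by rewrite (minn_idPl (leqnSn _)).
by rewrite (minn_idPr _) // ltn_neqAle ne le_sup.
Qed.

Lemma rho_gen_le_cover (X Y : {set E}) :
  X \in Dext D a -> Y \in D -> X :\ a \subset Y ->
  rho_a X <= rho Y + #|X :\: Y|.
Proof.
move=> XDa YD sXaY; case/boolP: (X \in D) => XD.
  rewrite rho_gen_in //; apply: leq_trans (rhoU_le_card YD XD).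
  by rewrite rho_mono ?DU ?subsetUr.
have [_ XaD] := Dext_notin XDa XD; rewrite rho_gen_out // geq_min.
case/boolP: (X \subset Y) => sXY.
  rewrite (leq_trans _ (leq_addr _ _)) //.
  by rewrite rho_mono ?supD_in ?supD_min.
have XY0 : 0 < #|X :\: Y| by rewrite card_gt0 setD_eq0.
by rewrite -addn1 leq_add ?rho_mono ?orbT.
Qed.

Lemma rho_gen_le (X Y : {set E}) :
  X \in Dext D a -> Y \in D -> rho_a X <= rho Y + #|X :\: Y|.
Proof.
move=> XDa YD; have /DextP[T [TD sXaT sTX]] := XDa.
have := rho_gen_le_cover XDa (DU YD TD) (subset_trans sXaT (subsetUr Y T)).
move/leq_trans; apply.
have -> : #|X :\: Y| = #|T :\: Y| + #|X :\: (Y :|: T)|.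
  by rewrite -setDDl -(cardsID T (X :\: Y)) setIC setIDA (setIidPl sTX).
by rewrite addnA leq_add2r rhoU_le_card.
Qed.

Lemma rho_gen_attained (X : {set E}) : X \in Dext D a ->
  exists2 Y, Y \in D & rho_a X = rho Y + #|X :\: Y|.
Proof.
move=> XDa; case/boolP: (X \in D) => XD.
  by exists X; rewrite ?rho_gen_in // setDv cards0 addn0.
have [aX XaD] := Dext_notin XDa XD; rewrite rho_gen_out //.
have [le_sup | lt_sup] := leqP (rho (supD D X)) (rho (X :\ a)).+1.
  exists (supD D X); first exact: supD_in.
  by move: (supD_sup D X); rewrite -setD_eq0 => /eqP->; rewrite cards0 addn0.
exists (X :\ a) => //.
by rewrite setDDr setDv set0U (setIidPr _) ?sub1set // cards1 addn1.
Qed.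

Lemma rho_gen_mono (A B : {set E}) :
  A \in Dext D a -> B \in Dext D a -> A \subset B -> rho_a A <= rho_a B.
Proof.
move=> ADa BDa sAB; have [Y YD ->] := rho_gen_attained BDa.
by rewrite (leq_trans (rho_gen_le ADa YD)) // leq_add2l subset_leq_card ?setSD.
Qed.

Lemma rho_gen_submod (A B : {set E}) : A \in Dext D a -> B \in Dext D a ->
  rho_a (A :|: B) + rho_a (A :&: B) <= rho_a A + rho_a B.
Proof.
move=> ADa BDa.
have [YA YAD ->] := rho_gen_attained ADa.
have [YB YBD ->] := rho_gen_attained BDa.
have := rho_gen_le (DextU DU ADa BDa) (DU YAD YBD).
have := rho_gen_le (DextI DI ADa BDa) (DI YAD YBD).
have := rho_submod YAD YBD; have := cardsDUI_le A B YA YB.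
lia.
Qed.

Lemma rho_gen_unit (A : {set E}) e :
  A \in Dext D a -> A :|: [set e] \in Dext D a ->
  rho_a (A :|: [set e]) <= (rho_a A).+1.
Proof.
move=> ADa AeDa; have [Y YD ->] := rho_gen_attained ADa.
rewrite (leq_trans (rho_gen_le AeDa YD)) // -addnS leq_add2l setDUl.
rewrite (leq_trans (leq_card_setU _ _)) // -addn1 leq_add2l.
by rewrite -(cards1 e) subset_leq_card ?subsetDl.
Qed.

End Rank.
End AtomExtension.

Theorem theorem4p10 (E : finType) (D : {set {set E}}) (rho : {set E} -> nat)
    (a : E) :
  U_matroid D rho -> [set a] \notin D ->
  U_matroid (Dext D a) (rho_gen D rho a) /\
  lattice_extension D rho (Dext D a) (rho_gen D rho a).
Proof.
(* [[set a] \notin D] only makes D[a] differ from D (it always contains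
   [set a]); the argument does not use it. *)
move=> [hD rho0 rho_mono rho_submod rho_unit] _.
have [D0 DT DU DI Dacc] := hD.
have hDa : U_matroid (Dext D a) (rho_gen D rho a).
  split; first exact: Dext_lattice.
  - by rewrite rho_gen_in.
  - move=> A B; exact: rho_gen_mono.
  - move=> A B; exact: rho_gen_submod.
  - move=> A e; exact: rho_gen_unit.
split; first exact: hDa.
by split; [exact: hDa | exact: subset_Dext | move=> A; exact: rho_gen_in].
Qed.
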